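(* Let $A=\{x_1,\dots,x_\ell\}$ be a finite subset of $(\mathbb{R}\cup\{-\infty\})^d$ and let $\{\alpha_k\}_{k\in\mathbb N}$ be a sequence of positive real numbers with $\lim_{k\to\infty}\alpha_k=+\infty$. Then, in the Painlevé–Kuratowski sense, $$\lim_{k\to\infty} Co^{\sigma_{\alpha_k}}(A)=Co^{\sigma_{\infty}}(A).$$ Similarly, let $A=\{x_1,\dots,x_\ell\}$ be a finite subset of $(\mathbb{R}\cup\{+\infty\})^d$ and let $\{\alpha_k\}_{k\in\mathbb N}$ be a sequence of negative real numbers with $\lim_{k\to\infty}\alpha_k=-\infty$. Then $$\lim_{k\to\infty} Co^{\sigma_{\alpha_k}}(A)=Co^{\sigma_{-\infty}}(A).$$
   Context: Notation: $1\!\!1_d$ is the vector of ones in dimension $d$; $\mathbf{e}^z$ and $\mathbf{ln}(z)$ denote componentwise exponential and logarithm, with conventions $e^{-\infty}=0$, $\ln 0=-\infty$, and for $\alpha\neq 0$, $e^{\alpha t}=0$ when $\alpha t=-\infty$. For $\alpha\neq 0$ let $\mathbb M_\alpha=\mathbb{R}\cup\{-\infty\}$ if $\alpha>0$ and $\mathbb M_\alpha=\mathbb{R}\cup\{+\infty\}$ if $\alpha<0$. For a finite set $A=\{x_1,\dots,x_\ell\}\subset\mathbb M_\alpha^d$, the $\sigma_\alpha$-convex hull is $$Co^{\sigma_\alpha}(A)=\Big\{\tfrac1\alpha\mathbf{ln}\Big(\sum_{k=1}^\ell \mathbf e^{\alpha(t_k1\!\!1_d+x_k)}\Big):\ \tfrac1\alpha\ln\Big(\sum_{k=1}^\ell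 e^{\alpha t_k}\Big)=0,\ t\in\mathbb M_\alpha^\ell\Big\}.$$ The Max-Plus convex hull of $A\subset(\mathbb{R}\cup\{-\infty\})^d$ is $Co^{\sigma_\infty}(A)=\{\bigvee_{k}(t_k1\!\!1_d+x_k):\max_k t_k=0,\ t\in(\mathbb{R}\cup\{-\infty\})^\ell\}$, and the Min-Plus convex hull of $A\subset(\mathbb{R}\cup\{+\infty\})^d$ is $Co^{\sigma_{-\infty}}(A)=\{\bigwedge_{k}(t_k1\!\!1_d+x_k):\min_k t_k=0,\ t\in(\mathbb{R}\cup\{+\infty\})^\ell\}$, where $\vee,\wedge$ are componentwise max and min. For a sequence of sets $E_n$, the lower Painlevé–Kuratowski limit is the set of points $p$ such that there exist $p_n\in E_n$ with $p_n\to p$; the upper limit is the set of $p$ such that $p_{n_j}\to p$ for some subsequence with $p_{n_j}\in E_{n_j}$; the limit exists and equals $E$ when both coincide with $E$. (Points with infinite coordinates are handled with the usual order topology on $\mathbb{R}\cup\{\pm\infty\}$.) *)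

From mathcomp Require Import all_boot all_order all_algebra.
From mathcomp Require Import all_classical all_reals all_analysis.
Set Implicit Arguments. Unset Strict Implicit. Unset Printing Implicit Defensive.
Import Order.TTheory GRing.Theory Num.Theory.
Local Open Scope classical_set_scope.
Local Open Scope ring_scope.

Section Defs.
Variable R : realType.

Definition Malpha (alpha : R) (s : \bar R) : Prop :=
  if 0 < alpha then s <> +oo%E else s <> -oo%E.

(* (1/alpha) ln (y), with ln 0 = -oo, for y >= 0 an extended real *)
Definition inv_alpha_ln (alpha : R) (y : \bar R) : \bar R :=
  ((alpha^-1)%:E * lne y)%E.

Definition Co_sigma (d l : nat) (alpha : R) (x : 'I_l -> 'I_d -> \bar R)
  : set ('I_d -> \bar R) :=
  [set p | exists t : 'I_l -> \bar R,
     (forall k, Malpha alpha (t k)) /\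
     inv_alpha_ln alpha (\sum_(k < l) expeR (alpha%:E * t k))%E = 0%E /\
     p = (fun i => inv_alpha_ln alpha
                    (\sum_(k < l) expeR (alpha%:E * (t k + x k i)))%E)].

Definition Co_maxplus (d l : nat) (x : 'I_l -> 'I_d -> \bar R)
  : set ('I_d -> \bar R) :=
  [set p | exists t : 'I_l -> \bar R,
     (forall k, t k <> +oo%E) /\
     \big[Order.max/-oo%E]_(k < l) t k = 0%E /\
     p = (fun i => \big[Order.max/-oo%E]_(k < l) (t k + x k i)%E)].

Definition Co_minplus (d l : nat) (x : 'I_l -> 'I_d -> \bar R)
  : set ('I_d -> \bar R) :=
  [set p | exists t : 'I_l -> \bar R,
     (forall k, t k <> -oo%E) /\
     \big[Order.min/+oo%E]_(k < l) t k = 0%E /\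
     p = (fun i => \big[Order.min/+oo%E]_(k < l) (t k + x k i)%E)].

(* convergence in (\bar R)^d: componentwise, in the order topology of \bar R *)
Definition cvg_pt (d : nat) (q : nat -> 'I_d -> \bar R) (p : 'I_d -> \bar R) :=
  forall i, (fun n => q n i) @ \oo --> p i.

Definition PK_liminf (d : nat) (E : nat -> set ('I_d -> \bar R)) :=
  [set p | exists q : nat -> 'I_d -> \bar R,
     (forall n, E n (q n)) /\ cvg_pt q p].

Definition PK_limsup (d : nat) (E : nat -> set ('I_d -> \bar R)) :=
  [set p | exists (phi : nat -> nat) (q : nat -> 'I_d -> \bar R),
     (forall j, (phi j < phi j.+1)%N) /\
     (forall j, E (phi j) (q j)) /\ cvg_pt q p].

Definition PK_lim (d : nat) (E : nat -> set ('I_d -> \bar R))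
  (F : set ('I_d -> \bar R)) :=
  PK_liminf E = F /\ PK_limsup E = F.

End Defs.

From mathcomp Require Import all_boot all_order all_algebra.
From mathcomp Require Import all_classical all_reals all_analysis.
From mathcomp Require Import ring.
Import Order.TTheory GRing.Theory Num.Theory.
Import numFieldNormedType.Exports.
Local Open Scope classical_set_scope.
Local Open Scope ring_scope.

(** For [a > 0] the sigma_a-sum [logsumexp a y = (1/a) ln (sum_k e^(a y_k))]
    lies between [max_k y_k] and [max_k y_k + ln l / a].  Hence a point of the
    sigma_a-hull with weights [t] is within [ln l / a] of the max-plus
    combination with the same weights, whose largest weight is within
    [ln l / a] of 0; conversely the max-plus combination with weights [t] is
    the limit of the sigma_a-combinations with the normalised weights
    [t - logsumexp a t].  A limit point [p] of approximate combinations is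
    represented with the canonical weights [theta_k = sup {s <= 0 | s + x_k <= p}]:
    some index attains the relevant maximum infinitely often, which yields
    [max_k theta_k = 0] and [p <= max_k (theta_k + x_k)].  The case
    [alpha -> -oo] reduces to this one by negating points and weights, which
    exchanges sigma_alpha with sigma_(-alpha) and min-plus with max-plus. *)

Section LogSumExp.
Context {R : realType} {l : nat}.
Local Open Scope ereal_scope.
Implicit Types (a c : R) (m : \bar R) (y z : 'I_l -> \bar R).

Definition logsumexp a y : \bar R :=
  inv_alpha_ln a (\sum_(k < l) expeR (a%:E * y k)).

Lemma logsumexpNN a y : logsumexp (- a) (fun k => - y k) = - logsumexp a y.
Proof.
rewrite /logsumexp /inv_alpha_ln invrN EFinN mulNe.
by under eq_bigr do rewrite EFinN muleNN.
Qed.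

Lemma logsumexpDr a y c : a != 0%R ->
  logsumexp a (fun k => y k + c%:E) = logsumexp a y + c%:E.
Proof.
move=> a_neq0; rewrite /logsumexp /inv_alpha_ln.
have -> : \sum_(k < l) expeR (a%:E * (y k + c%:E)) =
          (\sum_(k < l) expeR (a%:E * y k)) * (expR (a * c))%:E.
  rewrite ge0_sume_distrl => [|k _]; last exact: expeR_ge0.
  by apply: eq_bigr => k _; rewrite muleDr ?fin_num_adde_defl // expeRD -EFinM.
set S := \sum_(k < l) _.
have [->|S_neq0] := eqVneq S 0.
  rewrite mul0e le0_lneNy //.
  have [a_lt0|a_gt0|/eqP] := ltgtP a 0%R; last by rewrite (negPf a_neq0).
  - by rewrite lt0_muleNy ?lte_fin ?invr_lt0 // addye.
  - by rewrite gt0_muleNy ?lte_fin ?invr_gt0 // addNye.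
have S_gt0 : 0 < S by rewrite lt0e S_neq0 sume_ge0 // => k _; exact: expeR_ge0.
rewrite lneM; last 2 first.
- by rewrite in_itv /= S_gt0 leey.
- by rewrite in_itv /= lte_fin expR_gt0 leey.
rewrite lne_EFin ?expR_gt0 //.
by rewrite expRK muleDr ?fin_num_adde_defl // -EFinM mulKf.
Qed.

Section PositiveExponent.
Context {a : R} (a_gt0 : (0 < a)%R).

Lemma le_logsumexp2 y z :
  (forall k, y k <= z k) -> logsumexp a y <= logsumexp a z.
Proof.
move=> yz; rewrite /logsumexp /inv_alpha_ln lee_pmul2l ?lte_fin ?invr_gt0 //.
rewrite lee_lne ?in_itv /= ?leey ?sume_ge0 // => [|k _|k _]; try exact: expeR_ge0.
by apply: lee_sum => k _; rewrite lee_expeR lee_pmul2l ?lte_fin.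
Qed.

Lemma le_logsumexp y k : y k <= logsumexp a y.
Proof.
have {1}-> : y k = a^-1%:E * lne (expeR (a%:E * y k)).
  by rewrite expeRK muleA -EFinM mulVf ?gt_eqF // mul1e.
rewrite /logsumexp /inv_alpha_ln lee_pmul2l ?lte_fin ?invr_gt0 //.
rewrite lee_lne ?in_itv /= ?leey ?expeR_ge0 ?sume_ge0 // => [|i _]; last exact: expeR_ge0.
by rewrite (bigD1 k) //= leeDl // sume_ge0 // => i _; exact: expeR_ge0.
Qed.

Lemma bigmax_le_logsumexp y : \big[Order.max/-oo]_(k < l) y k <= logsumexp a y.
Proof. by apply: bigmax_le => [|k _]; [exact: leNye | exact: le_logsumexp]. Qed.

Lemma logsumexp_cst m : (0 < l)%N ->
  logsumexp a (fun=> m) = m + (ln l%:R / a)%:E.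
Proof.
move=> l_gt0; rewrite /logsumexp /inv_alpha_ln.
have -> : \sum_(k < l) expeR (a%:E * m) = l%:R%:E * expeR (a%:E * m).
  by rewrite sumr_const card_ord mule_natl.
have l_pos : (0 < l%:R :> R)%R by rewrite ltr0n.
case: m => [r| |].
- rewrite -EFinM lne_EFin ?mulr_gt0 ?expR_gt0 //.
  rewrite lnM ?posrE ?expR_gt0 // expRK -EFinM -EFinD.
  by congr _%:E; field; rewrite gt_eqF.
- rewrite gt0_muley ?lte_fin // (_ : expeR +oo = +oo) // gt0_muley ?lte_fin //.
  by rewrite (_ : lne +oo = +oo) // gt0_muley ?lte_fin ?invr_gt0 // addye.
- rewrite gt0_muleNy ?lte_fin // (_ : expeR -oo = 0) // mule0 le0_lneNy //.
  by rewrite gt0_muleNy ?lte_fin ?invr_gt0 // addNye.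
Qed.

Lemma logsumexp_le_bigmax y : (0 < l)%N ->
  logsumexp a y <= \big[Order.max/-oo]_(k < l) y k + (ln l%:R / a)%:E.
Proof.
move=> l_gt0; rewrite -logsumexp_cst //; apply: le_logsumexp2 => k.
exact: le_bigmax.
Qed.

End PositiveExponent.
End LogSumExp.

Lemma Co_sigmaE {R : realType} {d l : nat} (a : R) (x : 'I_l -> 'I_d -> \bar R) :
  Co_sigma a x = [set p | exists t : 'I_l -> \bar R,
    (forall k, Malpha a (t k)) /\ logsumexp a t = 0%E /\
    p = (fun i => logsumexp a (fun k => t k + x k i)%E)].
Proof. by []. Qed.

Definition infinitely_often (P : nat -> Prop) :=
  forall N, exists2 n, (N <= n)%N & P n.

Lemma pigeonhole_often (I : finType) (P : nat -> I -> Prop) :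
  (forall n, exists k, P n k) -> exists k, infinitely_often (P ^~ k).
Proof.
move=> P_ex; apply: contrapT => /forallNP not_often.
have /choice [N N_bound] k : exists N, forall n, (N <= n)%N -> ~ P n k.
  have /existsNP [N often_N] := not_often k.
  by exists N => n Nn Pnk; apply: often_N; exists n.
have [k Pk] := P_ex (\max_(k : I) N k).
exact: N_bound k _ (leq_bigmax k) Pk.
Qed.

Lemma cvg_ge_id {g : nat -> nat} : (forall n, (n <= g n)%N) -> g @ \oo --> \oo.
Proof.
move=> g_ge; apply/cvgnyPge => M; near=> n; apply: leq_trans (g_ge n).
by near: n; exact: nbhs_infty_ge.
Unshelve. all: by end_near. Qed.

Section ExtendedLimits.
Context {R : realType}.
Local Open Scope ereal_scope.
Implicit Types (u v : nat -> \bar R) (e : nat -> R).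

Lemma cvgeD_EFin {u e} {U : \bar R} {c : R} : u @ \oo --> U -> e @ \oo --> c ->
  (fun n => u n + (e n)%:E) @ \oo --> U + c%:E.
Proof.
move=> uU ec; apply: cvgeD; [exact: fin_num_adde_defl | exact: uU |].
by apply: cvg_EFin; [exact: nearW | exact: ec].
Qed.

Lemma lee_cvg_often {u v e} {U V : \bar R} :
  u @ \oo --> U -> v @ \oo --> V -> e @ \oo --> 0%R ->
  infinitely_often (fun n => u n <= v n + (e n)%:E) -> U <= V.
Proof.
move=> uU vV e0 often.
have /choice [g g_often] N : exists n, (N <= n)%N /\ u n <= v n + (e n)%:E.
  by have [n Nn le_uv] := often N; exists n.
have g_oo : g @ \oo --> \oo by apply: cvg_ge_id => N; exact: (g_often N).1.
have ve := cvgeD_EFin vV e0; rewrite adde0 in ve.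
apply: (lee_cvg_to (cvg_comp _ _ g_oo uU) (cvg_comp _ _ g_oo ve)).
by apply: nearW => n; exact: (g_often n).2.
Qed.

Lemma cvge_squeeze_EFin {u e} {U : \bar R} : e @ \oo --> 0%R ->
  (forall n, U <= u n + (e n)%:E) -> (forall n, u n <= U + (e n)%:E) ->
  u @ \oo --> U.
Proof.
move=> e0 U_le u_le.
have U_cvg e' : e' @ \oo --> 0%R -> (fun n => U + (e' n)%:E) @ \oo --> U.
  by move=> e'0; rewrite -[X in _ --> X]adde0; exact: cvgeD_EFin (cvg_cst _) e'0.
have eN0 : (fun n => - e n)%R @ \oo --> 0%R by rewrite -oppr0; exact: cvgN.
apply: (squeeze_cvge _ (U_cvg _ eN0) (U_cvg _ e0)).
by apply: nearW => n; rewrite u_le andbT EFinN leeBlDr.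
Qed.

End ExtendedLimits.

Lemma bigmax_attained_often {R : realType} {l : nat} (F : nat -> 'I_l -> \bar R) :
  (0 < l)%N ->
  exists k, infinitely_often (fun n => \big[Order.max/-oo%E]_(i < l) F n i = F n k).
Proof.
move=> l_gt0; apply: pigeonhole_often => n.
have [k _ ->] := eq_bigmax (Ordinal l_gt0) xpredT (F n) isT (fun i _ => leNye (F n i)).
by exists k.
Qed.

Section MaxPlusHull.
Context {R : realType} {d l : nat} (x : 'I_l -> 'I_d -> \bar R).
Hypothesis x_neqy : forall k i, x k i <> +oo%E.
Local Open Scope ereal_scope.
Implicit Types p : 'I_d -> \bar R.

Definition maxplus_coef p k : \bar R :=
  ereal_sup [set s | s <= 0 /\ forall i, s + x k i <= p i].

Lemma maxplus_coef_le0 p k : maxplus_coef p k <= 0.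
Proof. by apply: ge_ereal_sup => s []. Qed.

Lemma maxplus_coef_ge p k s :
  s <= 0 -> (forall i, s + x k i <= p i) -> s <= maxplus_coef p k.
Proof. by move=> s_le0 s_fit; exact: ereal_sup_ubound. Qed.

Lemma maxplus_coefD_le p k i : maxplus_coef p k + x k i <= p i.
Proof.
case xki : (x k i) => [r| |]; last by rewrite addeNy leNye.
  rewrite -leeBrDr //; apply: ge_ereal_sup => s [_ s_fit].
  by rewrite leeBrDr // -xki; exact: s_fit.
by have := x_neqy k i; rewrite xki.
Qed.

Lemma Co_maxplus_coef p :
  \big[Order.max/-oo]_(k < l) maxplus_coef p k = 0 ->
  (forall i, p i <= \big[Order.max/-oo]_(k < l) (maxplus_coef p k + x k i)) ->
  Co_maxplus x p.
Proof.
move=> coef_max p_le; exists (maxplus_coef p); split.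
  by move=> k coefy; have := maxplus_coef_le0 p k; rewrite coefy.
split=> //; apply/funext => i; apply/le_anti; rewrite p_le /=.
by apply: bigmax_le => [|k _]; [exact: leNye | exact: maxplus_coefD_le].
Qed.

Section Approximation.
Variables (e : nat -> R) (T : nat -> 'I_l -> \bar R).
Variables (q : nat -> 'I_d -> \bar R) (p : 'I_d -> \bar R).
Hypothesis l_gt0 : (0 < l)%N.
Hypothesis e0 : e @ \oo --> 0%R.
Hypothesis T_le0 : forall n, \big[Order.max/-oo]_(k < l) T n k <= 0.
Hypothesis T_ge0 : forall n, 0 <= \big[Order.max/-oo]_(k < l) T n k + (e n)%:E.
Hypothesis q_ge : forall n i,
  \big[Order.max/-oo]_(k < l) (T n k + x k i) <= q n i.
Hypothesis q_le : forall n i,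
  q n i <= \big[Order.max/-oo]_(k < l) (T n k + x k i) + (e n)%:E.
Hypothesis qp : cvg_pt q p.

Lemma bigmax_maxplus_coef_eq0 :
  \big[Order.max/-oo]_(k < l) maxplus_coef p k = 0.
Proof.
apply/le_anti/andP; split.
  by apply: bigmax_le => [|k _]; [exact: leNye | exact: maxplus_coef_le0].
have [k Tk] := bigmax_attained_often T l_gt0.
apply: le_trans (le_bigmax _ _ k); apply: maxplus_coef_ge => // i; rewrite add0e.
apply: (lee_cvg_often (cvg_cst (x k i)) (qp i) e0) => N.
have [n Nn /= Tnk] := Tk N; exists n => //.
apply: le_trans (leeD2r _ (le_trans (le_bigmax _ _ k) (q_ge n i))).
by rewrite addeAC; apply: lee_paddl => //; rewrite -Tnk.
Qed.

Lemma le_bigmax_maxplus_coefD i :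
  p i <= \big[Order.max/-oo]_(k < l) (maxplus_coef p k + x k i).
Proof.
have [k Tk] := bigmax_attained_often (fun n k => T n k + x k i) l_gt0.
have T_le n : T n k <= 0 := le_trans (le_bigmax _ _ k) (T_le0 n).
apply: le_trans (le_bigmax _ _ k).
case xki : (x k i) => [r| |]; last first.
- suff -> : p i = -oo by exact: leNye.
  apply/eqP; rewrite -leeNy_eq.
  apply: (lee_cvg_often (qp i) (cvg_cst -oo) e0) => N.
  have [n Nn /= Tnk] := Tk N; exists n => //.
  by apply: le_trans (q_le n i) _; rewrite Tnk xki addeNy addNye.
- by have := x_neqy k i; rewrite xki.
have pi_le : p i <= r%:E.
  apply: (lee_cvg_often (qp i) (cvg_cst r%:E) e0) => N.
  have [n Nn /= Tnk] := Tk N; exists n => //.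
  apply: le_trans (q_le n i) _; rewrite Tnk xki leeD2r //.
  by rewrite -[leRHS]add0e leeD2r.
(* [p i - r] is an admissible weight for [x k]. *)
rewrite -leeBlDr //; apply: maxplus_coef_ge; first by rewrite leeBlDr // add0e.
move=> j; case xkj : (x k j) => [r'| |]; last by rewrite addeNy leNye.
  rewrite -addeA -EFinD.
  apply: (lee_cvg_often (cvgeD_EFin (qp i) (cvg_cst (- r + r')%R)) (qp j) e0).
  move=> N; have [n Nn /= Tnk] := Tk N; exists n => //.
  apply: le_trans (leeD2r _ (q_le n i)) _; rewrite Tnk xki.
  have -> : T n k + r%:E + (e n)%:E + (- r + r')%:E = T n k + r'%:E + (e n)%:E.
    by rewrite -!addeA -!EFinD; congr (_ + _%:E); ring.
  by apply: leeD2r; rewrite -xkj; exact: le_trans (le_bigmax _ _ k) (q_ge n j).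
by have := x_neqy k j; rewrite xkj.
Qed.

End Approximation.
End MaxPlusHull.

Lemma cvg_divr_pinfty {R : realType} (c : R) {alpha : nat -> R} :
  (forall n, 0 < alpha n) -> alpha @ \oo --> +oo ->
  (fun n => c / alpha n) @ \oo --> 0.
Proof.
move=> alpha_gt0 alpha_oo.
have inv0 : (fun n => (alpha n)^-1) @ \oo --> 0.
  by apply/gtr0_cvgV0 => //; exact: nearW.
by rewrite -(mulr0 c); exact: cvgM (cvg_cst c) inv0.
Qed.

Lemma PK_liminf_sub_limsup {R : realType} {d : nat} (E : nat -> set ('I_d -> \bar R)) :
  PK_liminf E `<=` PK_limsup E.
Proof. by move=> p [q [q_in qp]]; exists id, q. Qed.

Lemma PK_limP {R : realType} {d : nat} (E : nat -> set ('I_d -> \bar R)) F :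
  PK_limsup E `<=` F -> F `<=` PK_liminf E -> PK_lim E F.
Proof.
move=> sup_F F_inf; have inf_sup := @PK_liminf_sub_limsup _ _ E.
split; apply/seteqP; split => // p; by [move/inf_sup/sup_F | move/F_inf/inf_sup].
Qed.

Section SigmaHull.
Context {R : realType} {d l : nat} (x : 'I_l -> 'I_d -> \bar R).
Variable alpha : nat -> R.
Hypothesis l_gt0 : (0 < l)%N.
Hypothesis alpha_gt0 : forall n, 0 < alpha n.
Hypothesis alpha_oo : alpha @ \oo --> +oo.
Local Open Scope ereal_scope.

Lemma PK_limsup_Co_sigma_sub_maxplus : (forall k i, x k i <> +oo) ->
  PK_limsup (fun n => Co_sigma (alpha n) x) `<=` Co_maxplus x.
Proof.
move=> x_neqy p [phi [q [phi_incr [q_in qp]]]].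
have phi_ge n : (n <= phi n)%N.
  by elim: n => // n IH; exact: leq_ltn_trans IH (phi_incr n).
have e0 := cvg_divr_pinfty (ln l%:R) (fun n => alpha_gt0 (phi n))
  (cvg_comp _ _ (cvg_ge_id phi_ge) alpha_oo).
have /choice [T T_def] n : exists t, logsumexp (alpha (phi n)) t = 0 /\
    q n = (fun i => logsumexp (alpha (phi n)) (fun k => t k + x k i)).
  by have [t [_ tq]] := q_in n; exists t.
have T_le0 n : \big[Order.max/-oo]_(k < l) T n k <= 0.
  by rewrite -(T_def n).1; exact: bigmax_le_logsumexp.
have T_ge0 n : 0 <= \big[Order.max/-oo]_(k < l) T n k + (ln l%:R / alpha (phi n))%:E.
  by rewrite -(T_def n).1; exact: logsumexp_le_bigmax.
have q_ge n i : \big[Order.max/-oo]_(k < l) (T n k + x k i) <= q n i.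
  by rewrite (T_def n).2; exact: bigmax_le_logsumexp.
have q_le n i : q n i <= \big[Order.max/-oo]_(k < l) (T n k + x k i)
                          + (ln l%:R / alpha (phi n))%:E.
  by rewrite (T_def n).2; exact: logsumexp_le_bigmax.
apply: (Co_maxplus_coef _ x_neqy) => [|i].
- exact: bigmax_maxplus_coef_eq0 T_ge0 q_ge qp.
- exact: le_bigmax_maxplus_coefD T_le0 q_ge q_le qp i.
Qed.

Lemma Co_maxplus_sub_PK_liminf :
  Co_maxplus x `<=` PK_liminf (fun n => Co_sigma (alpha n) x).
Proof.
move=> p [t [t_neqy [t_max ->]]].
have e0 := cvg_divr_pinfty (ln l%:R) alpha_gt0 alpha_oo.
pose c n := fine (logsumexp (alpha n) t).
have c_spec n : logsumexp (alpha n) t = (c n)%:E /\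
                (0 <= c n <= ln l%:R / alpha n)%R.
  have := bigmax_le_logsumexp (alpha_gt0 n) t.
  have := logsumexp_le_bigmax (alpha_gt0 n) t l_gt0.
  rewrite t_max add0e /c; case: (logsumexp _ t) => [r| |] //=.
  by rewrite !lee_fin => -> ->.
pose t' n k := t k + (- c n)%:E.
exists (fun n i => logsumexp (alpha n) (fun k => t' n k + x k i)); split.
  move=> n; rewrite Co_sigmaE; exists (t' n); split.
    by move=> k; rewrite /Malpha alpha_gt0 /t'; case: (t k) (t_neqy k).
  split=> //; rewrite /t' logsumexpDr ?lt0r_neq0 //.
  by rewrite (c_spec n).1 -EFinD subrr.
move=> i.
have shift n : logsumexp (alpha n) (fun k => t' n k + x k i) =
               logsumexp (alpha n) (fun k => t k + x k i) + (- c n)%:E.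
  rewrite -logsumexpDr ?lt0r_neq0 //; congr logsumexp.
  by apply/funext => k; rewrite /t' addeAC.
apply: (cvge_squeeze_EFin e0) => n; rewrite shift;
  have [_ /andP[c_ge0 c_le]] := c_spec n.
- rewrite -addeA -EFinD; apply: lee_paddr; first by rewrite lee_fin addrC subr_ge0.
  exact: bigmax_le_logsumexp (alpha_gt0 n) _.
- apply: le_trans (geeDl _ _) (logsumexp_le_bigmax (alpha_gt0 n) _ l_gt0).
  by rewrite lee_fin oppr_le0.
Qed.

End SigmaHull.

Lemma MalphaN {R : realType} (a : R) (s : \bar R) :
  a != 0 -> Malpha (- a) (- s) <-> Malpha a s.
Proof.
rewrite /Malpha oppr_gt0 => a_neq0.
have [a_lt0|a_gt0|a_eq0] := ltgtP a 0; last by rewrite a_eq0 eqxx in a_neq0.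
- by case: s.
- by case: s.
Qed.

Lemma Malpha_adde_def {R : realType} (a : R) (s s' : \bar R) :
  Malpha a s -> Malpha a s' -> (s +? s')%E.
Proof. by rewrite /Malpha; case: ifP => _; case: s => [r| |]; case: s' => [r'| |]. Qed.

Section Negation.
Context {R : realType} {d : nat}.
Local Open Scope ereal_scope.

Definition oppv (p : 'I_d -> \bar R) : 'I_d -> \bar R := fun i => - p i.

Lemma oppvK : involutive oppv.
Proof. by move=> p; apply/funext => i; rewrite /oppv oppeK. Qed.

Lemma cvg_pt_oppv q p : cvg_pt q p -> cvg_pt (fun n => oppv (q n)) (oppv p).
Proof. by move=> qp i; exact: cvgeN. Qed.

Lemma PK_liminf_oppv (E : nat -> set ('I_d -> \bar R)) :
  PK_liminf (fun n => oppv @^-1` E n) = oppv @^-1` PK_liminf E.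
Proof.
apply/seteqP; split => p [q [q_in qp]].
  by exists (fun n => oppv (q n)); split => //; exact: cvg_pt_oppv.
exists (fun n => oppv (q n)); split; first by move=> n; rewrite /= oppvK.
by rewrite -[p]oppvK; exact: cvg_pt_oppv.
Qed.

Lemma PK_limsup_oppv (E : nat -> set ('I_d -> \bar R)) :
  PK_limsup (fun n => oppv @^-1` E n) = oppv @^-1` PK_limsup E.
Proof.
apply/seteqP; split => p [phi [q [phi_incr [q_in qp]]]].
  by exists phi, (fun n => oppv (q n)); split => //; split => //; exact: cvg_pt_oppv.
exists phi, (fun n => oppv (q n)); split => //; split; first by move=> n; rewrite /= oppvK.
by rewrite -[p]oppvK; exact: cvg_pt_oppv.
Qed.

Lemma PK_lim_oppv (E : nat -> set ('I_d -> \bar R)) F :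
  PK_lim E F -> PK_lim (fun n => oppv @^-1` E n) (oppv @^-1` F).
Proof. by case=> inf sup; rewrite /PK_lim PK_liminf_oppv PK_limsup_oppv inf sup. Qed.

Variable l : nat.
Implicit Types x : 'I_l -> 'I_d -> \bar R.

Lemma Co_sigma_sub_oppv (a : R) x : a != 0%R -> (forall k i, Malpha a (x k i)) ->
  Co_sigma a x `<=` oppv @^-1` Co_sigma (- a) (fun k => oppv (x k)).
Proof.
rewrite !Co_sigmaE => a_neq0 x_in p [t [t_in [t0 ->]]].
exists (fun k => - t k); split; first by move=> k; apply/MalphaN.
rewrite logsumexpNN t0 oppe0; split => //.
apply/funext => i; rewrite /oppv -logsumexpNN; congr logsumexp.
by apply/funext => k; rewrite oppeD //; exact: Malpha_adde_def.
Qed.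

Lemma Co_sigma_oppv (a : R) x : a != 0%R -> (forall k i, Malpha a (x k i)) ->
  Co_sigma a x = oppv @^-1` Co_sigma (- a) (fun k => oppv (x k)).
Proof.
move=> a_neq0 x_in; apply/seteqP; split; first exact: Co_sigma_sub_oppv.
move=> p p_in; rewrite -[p]oppvK -[a]opprK.
have -> : x = (fun k => oppv (oppv (x k))) by apply/funext => k; rewrite oppvK.
apply: Co_sigma_sub_oppv p_in; rewrite ?oppr_eq0 // => k i.
by apply/MalphaN; rewrite ?opprK.
Qed.

Lemma Co_minplus_oppv x : (forall k i, x k i <> -oo) ->
  Co_minplus x = oppv @^-1` Co_maxplus (fun k => oppv (x k)).
Proof.
move=> x_neqNy.
have oppe_bigmin (f : 'I_l -> \bar R) :
    - (\big[Order.min/+oo]_(k < l) f k) = \big[Order.max/-oo]_(k < l) - f k.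
  exact: (big_morph _ oppe_min (erefl : - +oo = -oo)).
have oppe_bigmax (f : 'I_l -> \bar R) :
    - (\big[Order.max/-oo]_(k < l) f k) = \big[Order.min/+oo]_(k < l) - f k.
  exact: (big_morph _ oppe_max (erefl : - -oo = +oo)).
apply/seteqP; split => p /=.
- move=> [t [t_neqNy [t_min ->]]]; exists (fun k => - t k); split.
    by move=> k; case: (t k) (t_neqNy k).
  split; first by rewrite -oppe_bigmin t_min oppe0.
  apply/funext => i; rewrite /oppv oppe_bigmin; apply: eq_bigr => k _.
  by rewrite oppeD //; case: (t k) (t_neqNy k); case: (x k i) (x_neqNy k i).
- move=> [t [t_neqy [t_max p_def]]]; exists (fun k => - t k); split.
    by move=> k; case: (t k) (t_neqy k).
  split; first by rewrite -oppe_bigmax t_max oppe0.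
  apply/funext => i; rewrite -[p i]oppeK -[- p i]/(oppv p i) p_def oppe_bigmax.
  apply: eq_bigr => k _; rewrite /oppv oppeD ?oppeK //.
  by case: (t k) (t_neqy k); case: (x k i) (x_neqNy k i).
Qed.

End Negation.

Lemma PK_lim_Co_sigma_maxplus {R : realType} {d l : nat}
    (x : 'I_l -> 'I_d -> \bar R) (alpha : nat -> R) :
  (forall k i, x k i <> +oo%E) -> (forall n, 0 < alpha n) -> alpha @ \oo --> +oo ->
  PK_lim (fun n => Co_sigma (alpha n) x) (Co_maxplus x).
Proof.
case: l x => [|l] x x_neqy alpha_gt0 alpha_oo; last first.
  apply: PK_limP; first exact: PK_limsup_Co_sigma_sub_maxplus.
  exact: Co_maxplus_sub_PK_liminf.
apply: PK_limP => p.
- case=> phi [q [_ [q_in _]]]; have [t [_ [+ _]]] := q_in 0%N.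
  rewrite big_ord0 /inv_alpha_ln le0_lneNy // gt0_muleNy //.
  by rewrite lte_fin invr_gt0.
- by case=> t [_ [+ _]]; rewrite big_ord0.
Qed.

Theorem mainTheorem1 (R : realType) (d l : nat) :
  (forall (x : 'I_l -> 'I_d -> \bar R) (alpha : nat -> R),
     (forall k i, x k i <> +oo%E) ->
     (forall n, 0 < alpha n) ->
     alpha @ \oo --> +oo ->
     PK_lim (fun n => Co_sigma (alpha n) x) (Co_maxplus x))
  /\
  (forall (x : 'I_l -> 'I_d -> \bar R) (alpha : nat -> R),
     (forall k i, x k i <> -oo%E) ->
     (forall n, alpha n < 0) ->
     alpha @ \oo --> -oo ->
     PK_lim (fun n => Co_sigma (alpha n) x) (Co_minplus x)).
Proof.
split=> x alpha x_neq alpha_sgn alpha_lim; first exact: PK_lim_Co_sigma_maxplus.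
have -> : (fun n => Co_sigma (alpha n) x) =
          (fun n => oppv @^-1` Co_sigma (- alpha n) (fun k => oppv (x k))).
  apply/funext => n; apply: Co_sigma_oppv; first exact: ltr0_neq0.
  by move=> k i; rewrite /Malpha lt_gtF.
rewrite Co_minplus_oppv //; apply/PK_lim_oppv/PK_lim_Co_sigma_maxplus.
- by move=> k i; rewrite /oppv; case: (x k i) (x_neq k i).
- by move=> n; rewrite oppr_gt0.
- exact/cvgNry.
Qed.
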